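(* Let $\mathrm{U}(2)\subset\mathrm{SO}(4)\times\{1\}$ act on $\Lambda^2_-S^4$. Every point is mapped into the fiber over some ${}^t(x_1,0,0,0,x_5)$ with $x_1\ge0$. For $p_0$ in the fiber over ${}^t(x_1,0,0,0,x_5)$, the orbit $\mathrm{U}(2)\cdot p_0$ is diffeomorphic to: $\mathrm{U}(2)$ if $x_5\ne\pm1$ and $p_0=({}^t(x_1,0,0,0,x_5),{}^t(a_1,a_2,a_3))$ with $(a_1,a_2)\ne0$; $S^3$ if $x_5\ne\pm1$ and $(a_1,a_2)=0$; $S^2$ if $x_5=1$ and $p_0\ne0$; $S^1$ if $x_5=-1$ and $p_0$ has pole coordinates with $(A_2,A_3)\ne0$; a point if $x_5=1,p_0=0$, or $x_5=-1$ and $(A_2,A_3)=0$.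
   Context: $S^4\subset\mathbb R^5$ is the unit sphere, $\Lambda^2_-S^4$ the bundle of anti-self-dual 2-forms (round metric); $\mathrm{SO}(5)$ acts on $\Lambda^2_-S^4$ by lifting its linear action on $S^4$ to 2-forms ($g\cdot\omega=(g^{-1})^*\omega$). $\mathrm{U}(2)$ acts $\mathbb C$-linearly on $\mathbb C^2\cong\mathbb R^4$ via $(z_1,z_2)=(x_1+ix_2,x_3+ix_4)$ and fixes $x_5$. On $S^4\setminus\{x_5=\pm1\}$ use the frame $e_1=\frac{1}{\sqrt{1-x_5^2}}{}^t(-x_2,x_1,-x_4,x_3,0)$, $e_2=\frac{1}{\sqrt{1-x_5^2}}{}^t(-x_3,x_4,x_1,-x_2,0)$, $e_3=\frac{1}{\sqrt{1-x_5^2}}{}^t(-x_4,-x_3,x_2,x_1,0)$, $e_4=\frac{1}{\sqrt{1-x_5^2}}{}^t(-x_1x_5,-x_2x_5,-x_3x_5,-x_4x_5,1-x_5^2)$, dual coframe $e^i$, $\omega_1=e^{12}-e^{34}$, $\omega_2=e^{13}-e^{42}$, $\omega_3=e^{14}-e^{23}$; $(x,{}^t(a_1,a_2,a_3))$ denotes $\sum_ia_i\omega_i|_x$. At a pole ${}^t(0,0,0,0,\pm1)$ use the basis $f_1={}^t(1,0,0,0,0)$, $f_2={}^t(0,1,0,0,0)$, $f_3={}^t(0,0,1,0,0)$, $f_4={}^t(0,0,0,\pm1,0)$ of the tangent space, dual basis $f^i$, $\Omega_1=f^{12}-f^{34}$, $\Omega_2=f^{13}-f^{42}$, $\Omega_3=f^{14}-f^{23}$,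 and pole coordinates $(A_1,A_2,A_3)$ meaning the point $\sum_iA_i\Omega_i$. *)

From Stdlib Require Import Reals.
From mathcomp Require Import ssreflect ssrfun ssrbool eqtype ssrnat seq choice fintype bigop.
Set Implicit Arguments. Unset Strict Implicit. Unset Printing Implicit Defensive.
Local Open Scope R_scope.

Definition rsum (I : finType) (F : I -> R) : R := \big[Rplus/0]_(i : I) F i.

Definition rdist (I : finType) (x y : I -> R) : R := rsum (fun i => Rabs (x i - y i)).

Definition is_open (I : finType) (U : (I -> R) -> Prop) : Prop :=
  forall x, U x -> exists eps, 0 < eps /\ forall y, rdist x y < eps -> U y.

Definition cont_on (I : finType) (U : (I -> R) -> Prop) (f : (I -> R) -> R) : Prop :=
  forall x, U x -> forall eps, 0 < eps -> exists delta, 0 < delta /\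
    forall y, U y -> rdist x y < delta -> Rabs (f y - f x) < eps.

Definition shift (I : finType) (x : I -> R) (j : I) (t : R) : I -> R :=
  fun i => if i == j then x i + t else x i.

Fixpoint Ck_on (I : finType) (k : nat) (U : (I -> R) -> Prop) (f : (I -> R) -> R) : Prop :=
  match k with
  | O => cont_on U f
  | S k' => cont_on U f /\
      forall j : I, exists g : (I -> R) -> R,
        (forall x, U x -> derivable_pt_lim (fun t => f (shift x j t)) 0 (g x))
        /\ Ck_on k' U g
  end.

Definition smooth_on (I J : finType) (U : (I -> R) -> Prop) (F : (I -> R) -> (J -> R)) : Prop :=
  forall (k : nat) (j : J), Ck_on k U (fun x => F x j).

Definition smooth_map (I J : finType) (A : (I -> R) -> Prop) (f : (I -> R) -> (J -> R)) : Prop :=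
  forall a, A a -> exists U, is_open U /\ U a /\
    exists F, smooth_on U F /\ forall y, U y -> A y -> F y = f y.

Definition diffeomorphic (I J : finType) (A : (I -> R) -> Prop) (B : (J -> R) -> Prop) : Prop :=
  exists (f : (I -> R) -> (J -> R)) (g : (J -> R) -> (I -> R)),
    (forall a, A a -> B (f a)) /\ (forall b, B b -> A (g b)) /\
    (forall a, A a -> g (f a) = a) /\ (forall b, B b -> f (g b) = b) /\
    smooth_map A f /\ smooth_map B g.

Definition sphere (k : nat) : ('I_k.+1 -> R) -> Prop :=
  fun v => rsum (fun i => v i * v i) = 1.

Arguments sphere : clear implicits.

Definition point_set : ('I_0 -> R) -> Prop := fun _ => True.

(* U(2) realised as 4x4 real matrices: C-linear (commuting with J, the
   multiplication by i for (z1,z2) = (x1+ix2, x3+ix4)) and orthogonal. *)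
Definition Jmat (i j : 'I_4) : R :=
  match nat_of_ord i, nat_of_ord j with
  | 1, 0 => 1 | 0, 1 => -1 | 3, 2 => 1 | 2, 3 => -1 | _, _ => 0 end.

Definition delta (I : finType) (i j : I) : R := if i == j then 1 else 0.

Definition U2 (u : 'I_4 -> 'I_4 -> R) : Prop :=
  (forall i j, rsum (fun k => u k i * u k j) = delta i j) /\
  (forall i j, rsum (fun k => u i k * Jmat k j) = rsum (fun k => Jmat i k * u k j)).

Definition U2_set : ('I_4 * 'I_4 -> R) -> Prop := fun v => U2 (fun i j => v (i, j)).

Definition liftU2 (u : 'I_4 -> 'I_4 -> R) (i j : 'I_5) : R :=
  if (nat_of_ord i < 4)%N && (nat_of_ord j < 4)%N then u (inord i) (inord j)
  else if (nat_of_ord i == 4)%N && (nat_of_ord j == 4)%N then 1 else 0.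

(* A point is (x, M): x in S^4, M the 5x5 antisymmetric matrix of the *)
(* 2-form on T_x S^4, extended by zero along x: omega(u,v) = u^T M v. *)

Definition bpoint := (('I_5 -> R) * ('I_5 -> 'I_5 -> R))%type.

Definition mk5 (a b c d e : R) : 'I_5 -> R :=
  fun i => match nat_of_ord i with 0 => a | 1 => b | 2 => c | 3 => d | _ => e end.

Definition co (x : 'I_5 -> R) (k : nat) : R := x (inord k).

Definition sc (r : R) (v : 'I_5 -> R) : 'I_5 -> R := fun i => r * v i.

(* e^j wedge e^k as a matrix, using e^j(u) = <e_j, u> *)
Definition wedge (u v : 'I_5 -> R) : 'I_5 -> 'I_5 -> R := fun i j => u i * v j - v i * u j.

Definition msub (A B : 'I_5 -> 'I_5 -> R) : 'I_5 -> 'I_5 -> R := fun i j => A i j - B i j.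

Definition nrm (x : 'I_5 -> R) : R := sqrt (1 - co x 4 * co x 4).

Definition fe1 (x : 'I_5 -> R) := sc (/ nrm x) (mk5 (- co x 1) (co x 0) (- co x 3) (co x 2) 0).
Definition fe2 (x : 'I_5 -> R) := sc (/ nrm x) (mk5 (- co x 2) (co x 3) (co x 0) (- co x 1) 0).
Definition fe3 (x : 'I_5 -> R) := sc (/ nrm x) (mk5 (- co x 3) (- co x 2) (co x 1) (co x 0) 0).
Definition fe4 (x : 'I_5 -> R) := sc (/ nrm x)
  (mk5 (- co x 0 * co x 4) (- co x 1 * co x 4) (- co x 2 * co x 4) (- co x 3 * co x 4)
       (1 - co x 4 * co x 4)).

Definition omega1 x := msub (wedge (fe1 x) (fe2 x)) (wedge (fe3 x) (fe4 x)).
Definition omega2 x := msub (wedge (fe1 x) (fe3 x)) (wedge (fe4 x) (fe2 x)).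
Definition omega3 x := msub (wedge (fe1 x) (fe4 x)) (wedge (fe2 x) (fe3 x)).

Definition fiber_form (x : 'I_5 -> R) (a1 a2 a3 : R) : 'I_5 -> 'I_5 -> R :=
  fun i j => a1 * omega1 x i j + a2 * omega2 x i j + a3 * omega3 x i j.

Definition pole (s : R) : 'I_5 -> R := mk5 0 0 0 0 s.
Definition pf1 := mk5 1 0 0 0 0.
Definition pf2 := mk5 0 1 0 0 0.
Definition pf3 := mk5 0 0 1 0 0.
Definition pf4 (s : R) := mk5 0 0 0 s 0.
Definition Omega1 s := msub (wedge pf1 pf2) (wedge pf3 (pf4 s)).
Definition Omega2 s := msub (wedge pf1 pf3) (wedge (pf4 s) pf2).
Definition Omega3 s := msub (wedge pf1 (pf4 s)) (wedge pf2 pf3).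

Definition pole_form (s A1 A2 A3 : R) : 'I_5 -> 'I_5 -> R :=
  fun i j => A1 * Omega1 s i j + A2 * Omega2 s i j + A3 * Omega3 s i j.

Definition on_S4 (x : 'I_5 -> R) : Prop := rsum (fun i => x i * x i) = 1.

Definition in_Lambda2m (p : bpoint) : Prop :=
  on_S4 p.1 /\
  ( (co p.1 4 <> 1 /\ co p.1 4 <> -1 /\ exists a1 a2 a3, p.2 = fiber_form p.1 a1 a2 a3)
  \/ (p.1 = pole 1 /\ exists A1 A2 A3, p.2 = pole_form 1 A1 A2 A3)
  \/ (p.1 = pole (-1) /\ exists A1 A2 A3, p.2 = pole_form (-1) A1 A2 A3)).

(* g . (x, omega) = (g x, (g^{-1})^* omega), i.e. M |-> g M g^T for g orthogonal *)
Definition act (g : 'I_5 -> 'I_5 -> R) (p : bpoint) : bpoint :=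
  (fun i => rsum (fun k => g i k * p.1 k),
   fun i j => rsum (fun k => rsum (fun l => g i k * p.2 k l * g j l))).

Definition emb (p : bpoint) : ('I_5 + 'I_5 * 'I_5)%type -> R :=
  fun s => match s with inl i => p.1 i | inr ij => p.2 ij.1 ij.2 end.

Definition orbit (p0 : bpoint) : (('I_5 + 'I_5 * 'I_5)%type -> R) -> Prop :=
  fun v => exists u, U2 u /\ v = emb (act (liftU2 u) p0).

From HB Require Import structures.
From Stdlib Require Import Reals Lra Psatz FunctionalExtensionality.
From mathcomp Require Import ssreflect ssrfun ssrbool eqtype ssrnat seq choice fintype bigop.
Set Implicit Arguments. Unset Strict Implicit.
Local Open Scope R_scope.

HB.instance Definition Rplus_comlaw :=
  Monoid.isComLaw.Build R 0 Rplus (fun x y z => esym (Rplus_assoc x y z)) Rplus_comm Rplus_0_l.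

Section FiniteSums.
Variable I : finType.
Implicit Types F G : I -> R.

Lemma rsum_ext F G : (forall i, F i = G i) -> rsum F = rsum G.
Proof. by move=> H; apply: eq_bigr => i _. Qed.

Lemma rsum_plus F G : rsum (fun i => F i + G i) = rsum F + rsum G.
Proof. rewrite /rsum; elim/big_rec3: _ => [|i x y z _ ->]; ring. Qed.

Lemma rsum_scal c F : rsum (fun i => c * F i) = c * rsum F.
Proof. rewrite /rsum; elim/big_rec2: _ => [|i x y _ ->]; ring. Qed.

Lemma rsum_scalr c F : rsum (fun i => F i * c) = rsum F * c.
Proof. rewrite /rsum; elim/big_rec2: _ => [|i x y _ ->]; ring. Qed.

Lemma rsum_minus F G : rsum (fun i => F i - G i) = rsum F - rsum G.
Proof. rewrite /rsum; elim/big_rec3: _ => [|i x y z _ ->]; ring. Qed.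

Lemma rsum_ge0 F : (forall i, 0 <= F i) -> 0 <= rsum F.
Proof. move=> H; rewrite /rsum; elim/big_rec: _ => [|i x _ Hx]; [lra|]. have := H i; lra. Qed.

Lemma rsum_elem F i : (forall k, 0 <= F k) -> F i <= rsum F.
Proof.
move=> H; rewrite /rsum (bigD1 i) //=.
have : 0 <= \big[Rplus/0]_(k | k != i) F k.
  by elim/big_rec: _ => [|k x _ Hx]; [lra|]; have := H k; lra.
lra.
Qed.
End FiniteSums.

Lemma rsum_prod (I J : finType) (F : I -> R) (G : J -> R) :
  rsum (fun k => rsum (fun l => F k * G l)) = rsum F * rsum G.
Proof.
rewrite -rsum_scalr; apply: rsum_ext => k.
by rewrite -rsum_scal; apply: rsum_ext => l; ring.
Qed.

Lemma rsum_swap (I J : finType) (F : I -> J -> R) :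
  rsum (fun k => rsum (fun l => F k l)) = rsum (fun l => rsum (fun k => F k l)).
Proof. exact: exchange_big. Qed.

Lemma rsum_swap4 (I J K L : finType) (F : I -> J -> K -> L -> R) :
  rsum (fun i => rsum (fun j => rsum (fun k => rsum (fun l => F i j k l)))) =
  rsum (fun k => rsum (fun l => rsum (fun i => rsum (fun j => F i j k l)))).
Proof.
transitivity (rsum (fun i => rsum (fun k => rsum (fun j => rsum (fun l => F i j k l))))).
  by apply: rsum_ext => i; rewrite rsum_swap.
rewrite rsum_swap; apply: rsum_ext => k.
transitivity (rsum (fun i => rsum (fun l => rsum (fun j => F i j k l)))).
  by apply: rsum_ext => i; rewrite rsum_swap.
by rewrite rsum_swap.
Qed.

Notation o5_0 := (@Ordinal 5 0 isT).
Notation o5_1 := (@Ordinal 5 1 isT).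
Notation o5_2 := (@Ordinal 5 2 isT).
Notation o5_3 := (@Ordinal 5 3 isT).
Notation o5_4 := (@Ordinal 5 4 isT).
Notation q0 := (@Ordinal 4 0 isT).
Notation q1 := (@Ordinal 4 1 isT).
Notation q2 := (@Ordinal 4 2 isT).
Notation q3 := (@Ordinal 4 3 isT).
Notation t0 := (@Ordinal 3 0 isT).
Notation t1 := (@Ordinal 3 1 isT).
Notation t2 := (@Ordinal 3 2 isT).
Notation d0 := (@Ordinal 2 0 isT).
Notation d1 := (@Ordinal 2 1 isT).

Lemma rsum5 (F : 'I_5 -> R) : rsum F = F o5_0 + F o5_1 + F o5_2 + F o5_3 + F o5_4.
Proof.
rewrite /rsum; change (\big[Rplus/0]_(i < 5) F i = F o5_0 + F o5_1 + F o5_2 + F o5_3 + F o5_4).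
rewrite !big_ord_recl big_ord0 /= Rplus_0_r !Rplus_assoc.
by repeat f_equal; apply/val_inj.
Qed.
Lemma rsum4 (F : 'I_4 -> R) : rsum F = F q0 + F q1 + F q2 + F q3.
Proof.
rewrite /rsum; change (\big[Rplus/0]_(i < 4) F i = F q0 + F q1 + F q2 + F q3).
rewrite !big_ord_recl big_ord0 /= Rplus_0_r !Rplus_assoc.
by repeat f_equal; apply/val_inj.
Qed.
Lemma rsum3 (F : 'I_3 -> R) : rsum F = F t0 + F t1 + F t2.
Proof.
rewrite /rsum; change (\big[Rplus/0]_(i < 3) F i = F t0 + F t1 + F t2).
rewrite !big_ord_recl big_ord0 /= Rplus_0_r !Rplus_assoc.
by repeat f_equal; apply/val_inj.
Qed.
Lemma rsum2 (F : 'I_2 -> R) : rsum F = F d0 + F d1.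
Proof.
rewrite /rsum; change (\big[Rplus/0]_(i < 2) F i = F d0 + F d1).
rewrite !big_ord_recl big_ord0 /= Rplus_0_r.
by repeat f_equal; apply/val_inj.
Qed.

Lemma ord5_cases (P : 'I_5 -> Prop) :
  P o5_0 -> P o5_1 -> P o5_2 -> P o5_3 -> P o5_4 -> forall i, P i.
Proof.
move=> H0 H1 H2 H3 H4 [[|[|[|[|[|i]]]]] Hi] //.
- by rewrite (_ : Ordinal Hi = o5_0) //; apply/val_inj.
- by rewrite (_ : Ordinal Hi = o5_1) //; apply/val_inj.
- by rewrite (_ : Ordinal Hi = o5_2) //; apply/val_inj.
- by rewrite (_ : Ordinal Hi = o5_3) //; apply/val_inj.
- by rewrite (_ : Ordinal Hi = o5_4) //; apply/val_inj.
Qed.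
Lemma ord4_cases (P : 'I_4 -> Prop) : P q0 -> P q1 -> P q2 -> P q3 -> forall i, P i.
Proof.
move=> H0 H1 H2 H3 [[|[|[|[|i]]]] Hi] //.
- by rewrite (_ : Ordinal Hi = q0) //; apply/val_inj.
- by rewrite (_ : Ordinal Hi = q1) //; apply/val_inj.
- by rewrite (_ : Ordinal Hi = q2) //; apply/val_inj.
- by rewrite (_ : Ordinal Hi = q3) //; apply/val_inj.
Qed.
Lemma ord3_cases (P : 'I_3 -> Prop) : P t0 -> P t1 -> P t2 -> forall i, P i.
Proof.
move=> H0 H1 H2 [[|[|[|i]]] Hi] //.
- by rewrite (_ : Ordinal Hi = t0) //; apply/val_inj.
- by rewrite (_ : Ordinal Hi = t1) //; apply/val_inj.
- by rewrite (_ : Ordinal Hi = t2) //; apply/val_inj.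
Qed.
Lemma ord2_cases (P : 'I_2 -> Prop) : P d0 -> P d1 -> forall i, P i.
Proof.
move=> H0 H1 [[|[|i]] Hi] //.
- by rewrite (_ : Ordinal Hi = d0) //; apply/val_inj.
- by rewrite (_ : Ordinal Hi = d1) //; apply/val_inj.
Qed.

Lemma inord5_0 : (inord 0 : 'I_5) = o5_0. Proof. by apply/val_inj; rewrite /= inordK. Qed.
Lemma inord5_1 : (inord 1 : 'I_5) = o5_1. Proof. by apply/val_inj; rewrite /= inordK. Qed.
Lemma inord5_2 : (inord 2 : 'I_5) = o5_2. Proof. by apply/val_inj; rewrite /= inordK. Qed.
Lemma inord5_3 : (inord 3 : 'I_5) = o5_3. Proof. by apply/val_inj; rewrite /= inordK. Qed.
Lemma inord5_4 : (inord 4 : 'I_5) = o5_4. Proof. by apply/val_inj; rewrite /= inordK. Qed.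
Lemma inord4_0 : (inord 0 : 'I_4) = q0. Proof. by apply/val_inj; rewrite /= inordK. Qed.
Lemma inord4_1 : (inord 1 : 'I_4) = q1. Proof. by apply/val_inj; rewrite /= inordK. Qed.
Lemma inord4_2 : (inord 2 : 'I_4) = q2. Proof. by apply/val_inj; rewrite /= inordK. Qed.
Lemma inord4_3 : (inord 3 : 'I_4) = q3. Proof. by apply/val_inj; rewrite /= inordK. Qed.
Definition inordE := (inord5_0, inord5_1, inord5_2, inord5_3, inord5_4,
                      inord4_0, inord4_1, inord4_2, inord4_3).

Lemma mat_ext (A B : 'I_5 -> 'I_5 -> R) : (forall i j, A i j = B i j) -> A = B.
Proof.
move=> H; apply: functional_extensionality => i; apply: functional_extensionality => j; exact: H.
Qed.
Lemma vec_ext (A B : 'I_5 -> R) : (forall i, A i = B i) -> A = B.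
Proof. move=> H; apply: functional_extensionality => i; exact: H. Qed.

Lemma mk5_eta (y : 'I_5 -> R) : y = mk5 (y o5_0) (y o5_1) (y o5_2) (y o5_3) (y o5_4).
Proof. apply: vec_ext; exact: ord5_cases. Qed.

(* Polynomials are given by syntax trees
   with an explicit formal partial derivative; evaluation is locally
   Lipschitz, hence continuous, and differentiating stays polynomial. *)
Section PolynomialMaps.
Variable I : finType.

Inductive pexpr : Type :=
  | PConst of R | PVar of I | PAdd of pexpr & pexpr | PMul of pexpr & pexpr.

Fixpoint peval (e : pexpr) (x : I -> R) : R :=
  match e with
  | PConst c => c | PVar i => x i
  | PAdd a b => peval a x + peval b x | PMul a b => peval a x * peval b x end.

Fixpoint pderiv (e : pexpr) (j : I) : pexpr :=
  match e with
  | PConst _ => PConst 0 | PVar i => PConst (if i == j then 1 else 0)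
  | PAdd a b => PAdd (pderiv a j) (pderiv b j)
  | PMul a b => PAdd (PMul (pderiv a j) b) (PMul a (pderiv b j)) end.

Lemma shift0 (x : I -> R) j : shift x j 0 = x.
Proof. apply: functional_extensionality => i; rewrite /shift; case: ifP => _; ring. Qed.

Lemma pderiv_correct e x j :
  derivable_pt_lim (fun t => peval e (shift x j t)) 0 (peval (pderiv e j) x).
Proof.
elim: e => [c|i|a IHa b IHb|a IHa b IHb] /=.
- exact: derivable_pt_lim_const.
- rewrite /shift; case: (i == j) => /=.
  + have H := derivable_pt_lim_plus _ _ _ _ _
      (derivable_pt_lim_const (x i) 0) (derivable_pt_lim_id 0).
    by rewrite Rplus_0_l in H.
  + exact: derivable_pt_lim_const.
- exact: (derivable_pt_lim_plus _ _ _ _ _ IHa IHb).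
- have H := derivable_pt_lim_mult _ _ _ _ _ IHa IHb.
  by rewrite /= shift0 in H.
Qed.

Lemma rdist_ge0 (x y : I -> R) : 0 <= rdist x y.
Proof. apply: rsum_ge0 => i; exact: Rabs_pos. Qed.

Lemma rdist_coord (x y : I -> R) i : Rabs (y i - x i) <= rdist x y.
Proof.
rewrite Rabs_minus_sym; apply: (@rsum_elem _ (fun k => Rabs (x k - y k))) => k.
exact: Rabs_pos.
Qed.

Lemma peval_lipschitz e x : exists C, 0 <= C /\
  forall y, rdist x y < 1 -> Rabs (peval e y - peval e x) <= C * rdist x y.
Proof.
elim: e => [c|i|a [Ca [Ca0 Ha]] b [Cb [Cb0 Hb]]|a [Ca [Ca0 Ha]] b [Cb [Cb0 Hb]]] /=.
- exists 0; split; [lra|] => y _; rewrite Rminus_diag Rabs_R0; lra.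
- exists 1; split; [lra|] => y _; rewrite Rmult_1_l; exact: rdist_coord.
- exists (Ca + Cb); split; [lra|] => y Hy.
  have := Ha y Hy; have := Hb y Hy.
  rewrite (_ : peval a y + peval b y - (peval a x + peval b x) =
               (peval a y - peval a x) + (peval b y - peval b x)); last ring.
  have := Rabs_triang (peval a y - peval a x) (peval b y - peval b x); lra.
- exists ((Rabs (peval a x) + Ca) * Cb + Rabs (peval b x) * Ca); split.
    have := Rabs_pos (peval a x); have := Rabs_pos (peval b x); nra.
  move=> y Hy; have Hd := rdist_ge0 x y.
  have HA := Ha y Hy; have HB := Hb y Hy.
  rewrite (_ : peval a y * peval b y - peval a x * peval b x =
     peval a y * (peval b y - peval b x) + peval b x * (peval a y - peval a x)); last ring.
  have Hay : Rabs (peval a y) <= Rabs (peval a x) + Ca.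
    rewrite (_ : peval a y = peval a x + (peval a y - peval a x)); last ring.
    have := Rabs_triang (peval a x) (peval a y - peval a x); nra.
  apply: Rle_trans; first exact: Rabs_triang.
  rewrite !Rabs_mult.
  have H1 : Rabs (peval a y) * Rabs (peval b y - peval b x) <=
            (Rabs (peval a x) + Ca) * (Cb * rdist x y).
    by apply: Rmult_le_compat => //; exact: Rabs_pos.
  have H2 : Rabs (peval b x) * Rabs (peval a y - peval a x) <=
            Rabs (peval b x) * (Ca * rdist x y).
    by apply: Rmult_le_compat_l => //; exact: Rabs_pos.
  nra.
Qed.

Lemma peval_cont (U : (I -> R) -> Prop) e : cont_on U (peval e).
Proof.
move=> x _ eps Heps.
have [C [C0 HC]] := peval_lipschitz e x.
have Hq : 0 < eps / (C + 1) by apply: Rdiv_lt_0_compat; lra.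
exists (Rmin 1 (eps / (C + 1))); split; first by apply: Rmin_pos; lra.
move=> y _ Hy.
have Hy1 := Rmin_l 1 (eps / (C + 1)); have Hy2 := Rmin_r 1 (eps / (C + 1)).
have Hd := rdist_ge0 x y.
apply: Rle_lt_trans; first by apply: HC; lra.
have : C * rdist x y <= C * (eps / (C + 1)) by apply: Rmult_le_compat_l; lra.
have -> : C * (eps / (C + 1)) = eps - eps / (C + 1) by field; lra.
lra.
Qed.

Lemma peval_Ck k (U : (I -> R) -> Prop) e : Ck_on k U (peval e).
Proof.
elim: k e => [|k IH] e /=; first exact: peval_cont.
split; first exact: peval_cont.
move=> j; exists (peval (pderiv e j)); split; last exact: IH.
move=> x _; exact: pderiv_correct.
Qed.

Definition is_poly (f : (I -> R) -> R) := exists e, forall x, f x = peval e x.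

Lemma poly_ext f g : (forall x, f x = g x) -> is_poly f -> is_poly g.
Proof. move=> H [e He]; exists e => x; rewrite -H; exact: He. Qed.
Lemma poly_c c : is_poly (fun _ => c).
Proof. by exists (PConst c). Qed.
Lemma poly_v i : is_poly (fun x => x i).
Proof. by exists (PVar i). Qed.
Lemma poly_add f g : is_poly f -> is_poly g -> is_poly (fun x => f x + g x).
Proof. move=> [a Ha] [b Hb]; exists (PAdd a b) => x /=; by rewrite Ha Hb. Qed.
Lemma poly_mul f g : is_poly f -> is_poly g -> is_poly (fun x => f x * g x).
Proof. move=> [a Ha] [b Hb]; exists (PMul a b) => x /=; by rewrite Ha Hb. Qed.
Lemma poly_opp f : is_poly f -> is_poly (fun x => - f x).
Proof.
move=> H; apply: (@poly_ext (fun x => (-1) * f x)); first by move=> x; ring.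
by apply: poly_mul => //; exact: poly_c.
Qed.
Lemma poly_sub f g : is_poly f -> is_poly g -> is_poly (fun x => f x - g x).
Proof. move=> Hf Hg; apply: poly_add => //; exact: poly_opp. Qed.
Lemma poly_divc f c : is_poly f -> is_poly (fun x => f x / c).
Proof. move=> Hf; apply: poly_mul => //; exact: poly_c. Qed.

Lemma poly_rsum (K : finType) (F : K -> (I -> R) -> R) :
  (forall k, is_poly (F k)) -> is_poly (fun x => rsum (fun k => F k x)).
Proof.
move=> H; rewrite /rsum; elim: (index_enum K) => [|k r IH].
  by apply: (@poly_ext (fun _ => 0)); [move=> x; rewrite big_nil | exact: poly_c].
apply: (@poly_ext (fun x => F k x + \big[Rplus/0]_(i <- r) F i x)).
  by move=> x; rewrite big_cons.
exact: poly_add.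
Qed.

Lemma smooth_map_poly (J : finType) (A : (I -> R) -> Prop) (F : (I -> R) -> (J -> R)) :
  (forall j, is_poly (fun x => F x j)) -> smooth_map A F.
Proof.
move=> H a Ha; exists (fun _ => True); split.
  by move=> x _; exists 1; split; [lra|].
split=> //; exists F; split=> // k j.
have [e He] := H j.
have -> : (fun x => F x j) = peval e by apply: functional_extensionality.
exact: peval_Ck.
Qed.
End PolynomialMaps.

Ltac solve_poly :=
  repeat first [ progress intros | apply: poly_c | apply: poly_v | apply: poly_add
               | apply: poly_sub | apply: poly_mul | apply: poly_opp | apply: poly_divc
               | apply: poly_rsum ].

Lemma poly_diffeomorphic (I J : finType) (A : (I -> R) -> Prop) (B : (J -> R) -> Prop)
    (F : (I -> R) -> J -> R) (G : (J -> R) -> I -> R) :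
  (forall j, is_poly (fun x => F x j)) -> (forall i, is_poly (fun y => G y i)) ->
  (forall x, A x -> B (F x) /\ G (F x) = x) ->
  (forall y, B y -> A (G y) /\ F (G y) = y) ->
  diffeomorphic A B.
Proof.
move=> PF PG HA HB; exists F, G.
split; [by move=> x /HA []|split; [by move=> y /HB []|]].
split; [by move=> x /HA []|split; [by move=> y /HB []|]].
by split; apply: smooth_map_poly.
Qed.

Definition mv (g : 'I_5 -> 'I_5 -> R) (p : 'I_5 -> R) : 'I_5 -> R :=
  fun i => rsum (fun k => g i k * p k).
Definition act2 (g M : 'I_5 -> 'I_5 -> R) : 'I_5 -> 'I_5 -> R :=
  fun i j => rsum (fun k => rsum (fun l => g i k * M k l * g j l)).
Definition mmul (g h : 'I_5 -> 'I_5 -> R) : 'I_5 -> 'I_5 -> R :=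
  fun i j => rsum (fun k => g i k * h k j).
Definition lin3 (a1 a2 a3 : R) (A B C : 'I_5 -> 'I_5 -> R) : 'I_5 -> 'I_5 -> R :=
  fun i j => a1 * A i j + a2 * B i j + a3 * C i j.

Lemma act_eq g p : act g p = (mv g p.1, act2 g p.2).
Proof. by []. Qed.

Lemma act2_wedge g p q : act2 g (wedge p q) = wedge (mv g p) (mv g q).
Proof.
apply: mat_ext => i j; rewrite /act2 /wedge /mv.
rewrite -!rsum_prod -rsum_minus; apply: rsum_ext => k.
rewrite -rsum_minus; apply: rsum_ext => l; ring.
Qed.

Lemma act2_msub g A B : act2 g (msub A B) = msub (act2 g A) (act2 g B).
Proof.
apply: mat_ext => i j; rewrite /act2 /msub -rsum_minus; apply: rsum_ext => k.
rewrite -rsum_minus; apply: rsum_ext => l; ring.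
Qed.

Lemma act2_lin3 g a1 a2 a3 A B C :
  act2 g (lin3 a1 a2 a3 A B C) = lin3 a1 a2 a3 (act2 g A) (act2 g B) (act2 g C).
Proof.
apply: mat_ext => i j; rewrite /act2 /lin3 -!rsum_scal -!rsum_plus; apply: rsum_ext => k.
rewrite -!rsum_scal -!rsum_plus; apply: rsum_ext => l; ring.
Qed.

Lemma act2_msw g p q r s : act2 g (msub (wedge p q) (wedge r s)) =
  msub (wedge (mv g p) (mv g q)) (wedge (mv g r) (mv g s)).
Proof. by rewrite act2_msub !act2_wedge. Qed.

Lemma mv_mmul g h x : mv (mmul g h) x = mv g (mv h x).
Proof.
apply: vec_ext => i; rewrite /mv /mmul.
transitivity (rsum (fun k => rsum (fun l => g i l * (h l k * x k)))).
  by apply: rsum_ext => k; rewrite -rsum_scalr; apply: rsum_ext => l; ring.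
by rewrite rsum_swap; apply: rsum_ext => l; rewrite rsum_scal.
Qed.

Lemma act2_mmul g h M : act2 (mmul g h) M = act2 g (act2 h M).
Proof.
apply: mat_ext => i j; rewrite /act2 /mmul.
transitivity (rsum (fun k => rsum (fun l => rsum (fun p => rsum (fun q =>
   g i p * (h p k * M k l * h q l) * g j q))))).
  apply: rsum_ext => k; apply: rsum_ext => l.
  rewrite -rsum_scalr -rsum_prod; apply: rsum_ext => p; apply: rsum_ext => q; ring.
rewrite rsum_swap4; apply: rsum_ext => p; apply: rsum_ext => q.
rewrite -rsum_scal -rsum_scalr; apply: rsum_ext => k.
rewrite -rsum_scal -rsum_scalr; apply: rsum_ext => l; ring.
Qed.

Lemma act_mmul g h p : act (mmul g h) p = act g (act h p).
Proof. by rewrite !act_eq /= mv_mmul act2_mmul. Qed.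

Lemma mv_lift u p0 p1 p2 p3 p4 :
  mv (liftU2 u) (mk5 p0 p1 p2 p3 p4) =
  mk5 (u q0 q0 * p0 + u q0 q1 * p1 + u q0 q2 * p2 + u q0 q3 * p3)
      (u q1 q0 * p0 + u q1 q1 * p1 + u q1 q2 * p2 + u q1 q3 * p3)
      (u q2 q0 * p0 + u q2 q1 * p1 + u q2 q2 * p2 + u q2 q3 * p3)
      (u q3 q0 * p0 + u q3 q1 * p1 + u q3 q2 * p2 + u q3 q3 * p3) p4.
Proof.
apply: vec_ext; apply: ord5_cases; rewrite /mv rsum5 /liftU2 /= ?inordE /mk5 /=; ring.
Qed.

(* The C-linear real 4x4 matrix whose complex columns are (a+ib, e+if)
   and (c+id, g+ih): its real columns are v, J v, w, J w. *)
Definition vec4 (a b e f : R) (i : 'I_4) : R :=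
  match nat_of_ord i with 0 => a | 1 => b | 2 => e | _ => f end.
Definition jmat (a b e f c d g h : R) (i j : 'I_4) : R :=
  match nat_of_ord j with
  | 0 => vec4 a b e f i | 1 => vec4 (-b) a (-f) e i
  | 2 => vec4 c d g h i | _ => vec4 (-d) c (-h) g i end.

(* The element of U(2) with first column the unit quaternion (a,b,e,f) and
   second column the phase e^{i theta} = m + i n times (-e+if, a-ib). *)
Definition um (a b e f m n : R) : 'I_4 -> 'I_4 -> R :=
  jmat a b e f (-m*e-n*f) (m*f-n*e) (m*a+n*b) (-m*b+n*a).

Lemma um_U2 a b e f m n : a*a+b*b+e*e+f*f = 1 -> m*m+n*n = 1 -> U2 (um a b e f m n).
Proof.
move=> H1 H2; split; apply: ord4_cases; apply: ord4_cases;
  rewrite !rsum4 /delta /Jmat /um /jmat /vec4 /=. all: try ring. all: nra.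
Qed.

(* Commuting with J forces the second and fourth columns to be J times the
   first and third ones. *)
Lemma U2_jmat u : U2 u ->
  u = jmat (u q0 q0) (u q1 q0) (u q2 q0) (u q3 q0) (u q0 q2) (u q1 q2) (u q2 q2) (u q3 q2).
Proof.
move=> [_ Hc].
have E00 := Hc q0 q0; have E10 := Hc q1 q0; have E20 := Hc q2 q0; have E30 := Hc q3 q0.
have E02 := Hc q0 q2; have E12 := Hc q1 q2; have E22 := Hc q2 q2; have E32 := Hc q3 q2.
rewrite !rsum4 /Jmat /= in E00 E10 E20 E30 E02 E12 E22 E32.
apply: functional_extensionality => i; apply: functional_extensionality => j.
by move: i j; apply: ord4_cases; apply: ord4_cases; rewrite /jmat /vec4 /=; lra.
Qed.

(* A unit vector orthogonal to v and J v (v a unit vector of R^4) is a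
   phase multiple of the vector completing them to an orthonormal basis. *)
Lemma unit_phase a b e f c d g h :
  a*a+b*b+e*e+f*f = 1 -> c*c+d*d+g*g+h*h = 1 ->
  a*c+b*d+e*g+f*h = 0 -> -b*c+a*d-f*g+e*h = 0 ->
  exists m n, m*m+n*n = 1 /\
    c = -m*e-n*f /\ d = m*f-n*e /\ g = m*a+n*b /\ h = -m*b+n*a.
Proof.
move=> S1 S2 P1 P2.
set m := - c * e + d * f + g * a - h * b.
set n := - c * f - d * e + g * b + h * a.
exists m, n; split.
  have : m*m+n*n = (a*a+b*b+e*e+f*f) * (c*c+d*d+g*g+h*h)
      - (a*c+b*d+e*g+f*h)*(a*c+b*d+e*g+f*h) - (-b*c+a*d-f*g+e*h)*(-b*c+a*d-f*g+e*h)
    by rewrite /m /n; ring.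
  rewrite S1 S2 P1 P2; lra.
split.
  have : (a*a+b*b+e*e+f*f) * c = (a*c+b*d+e*g+f*h)*a + (-b*c+a*d-f*g+e*h)*(-b) + m*(-e) + n*(-f)
    by rewrite /m /n; ring.
  rewrite S1 P1 P2; lra.
split.
  have : (a*a+b*b+e*e+f*f) * d = (a*c+b*d+e*g+f*h)*b + (-b*c+a*d-f*g+e*h)*a + m*f + n*(-e)
    by rewrite /m /n; ring.
  rewrite S1 P1 P2; lra.
split.
  have : (a*a+b*b+e*e+f*f) * g = (a*c+b*d+e*g+f*h)*e + (-b*c+a*d-f*g+e*h)*(-f) + m*a + n*b
    by rewrite /m /n; ring.
  rewrite S1 P1 P2; lra.
have : (a*a+b*b+e*e+f*f) * h = (a*c+b*d+e*g+f*h)*f + (-b*c+a*d-f*g+e*h)*e + m*(-b) + n*a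
  by rewrite /m /n; ring.
rewrite S1 P1 P2; lra.
Qed.

Lemma U2_um u : U2 u -> exists a b e f m n,
  a*a+b*b+e*e+f*f = 1 /\ m*m+n*n = 1 /\ u = um a b e f m n.
Proof.
move=> Hu; have Hj := U2_jmat Hu; move: Hu; rewrite Hj.
move: (u q0 q0) (u q1 q0) (u q2 q0) (u q3 q0) (u q0 q2) (u q1 q2) (u q2 q2) (u q3 q2)
  => a b e f c d g h [Ho _].
have O00 := Ho q0 q0; have O22 := Ho q2 q2; have O02 := Ho q0 q2; have O12 := Ho q1 q2.
rewrite !rsum4 /delta /jmat /vec4 /= in O00 O22 O02 O12.
have [m [n [S2 [-> [-> [-> ->]]]]]] : exists m n, m*m+n*n = 1 /\
    c = -m*e-n*f /\ d = m*f-n*e /\ g = m*a+n*b /\ h = -m*b+n*a.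
  by apply: unit_phase; lra.
by exists a, b, e, f, m, n; split; [lra|].
Qed.

(* U(2) = SU(2)-part times the phase circle diag(1, m + i n). *)
Lemma liftU2_factor a b e f m n :
  liftU2 (um a b e f m n) = mmul (liftU2 (um a b e f 1 0)) (liftU2 (um 1 0 0 0 m n)).
Proof.
apply: mat_ext; apply: ord5_cases; apply: ord5_cases;
  rewrite /mmul rsum5 /liftU2 /= ?inordE /um /jmat /vec4 /=; ring.
Qed.

Lemma act_factor a b e f m n p :
  act (liftU2 (um a b e f m n)) p =
  act (liftU2 (um a b e f 1 0)) (act (liftU2 (um 1 0 0 0 m n)) p).
Proof. by rewrite liftU2_factor act_mmul. Qed.

Section Columns.
Variables a b e f m n : R.
Definition ucol0 := mk5 a b e f 0.
Definition ucol1 := mk5 (-b) a (-f) e 0.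
Definition ucol2 := mk5 (-m*e-n*f) (m*f-n*e) (m*a+n*b) (-m*b+n*a) 0.
Definition ucol3 (s : R) :=
  mk5 (s*(-(m*f-n*e))) (s*(-m*e-n*f)) (s*(-(-m*b+n*a))) (s*(m*a+n*b)) 0.
Let g := liftU2 (um a b e f m n).

Lemma mv_E1 : mv g (mk5 1 0 0 0 0) = ucol0.
Proof. rewrite /g mv_lift /um /jmat /vec4 /ucol0 /=; congr mk5; ring. Qed.
Lemma mv_E2 : mv g (mk5 0 1 0 0 0) = ucol1.
Proof. rewrite /g mv_lift /um /jmat /vec4 /ucol1 /=; congr mk5; ring. Qed.
Lemma mv_E3 : mv g (mk5 0 0 1 0 0) = ucol2.
Proof. rewrite /g mv_lift /um /jmat /vec4 /ucol2 /=; congr mk5; ring. Qed.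
Lemma mv_E4 s : mv g (mk5 0 0 0 s 0) = ucol3 s.
Proof. rewrite /g mv_lift /um /jmat /vec4 /ucol3 /=; congr mk5; ring. Qed.
Lemma mv_meridian x1 x5 : mv g (mk5 x1 0 0 0 x5) = mk5 (a*x1) (b*x1) (e*x1) (f*x1) x5.
Proof. rewrite /g mv_lift /um /jmat /vec4 /=; congr mk5; ring. Qed.
Lemma mv_normal x1 x5 :
  mv g (mk5 (-x5) 0 0 0 x1) = mk5 (-x5*a) (-x5*b) (-x5*e) (-x5*f) x1.
Proof. rewrite /g mv_lift /um /jmat /vec4 /=; congr mk5; ring. Qed.
Lemma mv_pole s : mv g (pole s) = pole s.
Proof. rewrite /g /pole mv_lift /um /jmat /vec4 /=; congr mk5; ring. Qed.
End Columns.

(* Every point of S^4 is moved by U(2) onto a meridian t(x1,0,0,0,x5),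
   x1 >= 0: rotate (x1,..,x4) in C^2 onto the positive x1-axis. *)
Lemma reduce_to_meridian (p : bpoint) :
  exists u, U2 u /\ exists x1 x5, 0 <= x1 /\ (act (liftU2 u) p).1 = mk5 x1 0 0 0 x5.
Proof.
rewrite /act /=; move: p.1 => y; rewrite (mk5_eta y).
move: (y o5_0) (y o5_1) (y o5_2) (y o5_3) (y o5_4) => y0 y1 y2 y3 y4.
set r2 := y0*y0+y1*y1+y2*y2+y3*y3.
have Hr2 : 0 <= r2 by rewrite /r2; nra.
case: (Req_dec r2 0) => Hz.
  exists (um 1 0 0 0 1 0); split; first by apply: um_U2; lra.
  exists 0, y4; split; first lra.
  have [Z0 [Z1 [Z2 Z3]]] : y0 = 0 /\ y1 = 0 /\ y2 = 0 /\ y3 = 0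
    by rewrite /r2 in Hz; split; [nra|split; [nra|split; nra]].
  rewrite -/(mv _ _) mv_lift /um /jmat /vec4 /= Z0 Z1 Z2 Z3; congr mk5; ring.
set r := sqrt r2.
have Hr : r * r = r2 by apply: sqrt_sqrt.
have Hr0 : 0 < r by apply: sqrt_lt_R0; lra.
exists (um (y0/r) (-y1/r) (-y2/r) (-y3/r) 1 0); split.
  apply: um_U2; last lra.
  by field_simplify_eq; [rewrite /r2 in Hr; nra | lra].
exists r, y4; split; first lra.
rewrite -/(mv _ _) mv_lift /um /jmat /vec4 /=; congr mk5.
- by field_simplify_eq; [rewrite /r2 in Hr; nra | lra].
- by field; lra.
- by field; lra.
- by field; lra.
Qed.

Lemma nrm_meridian x1 x5 : 0 <= x1 -> x1*x1+x5*x5 = 1 -> nrm (mk5 x1 0 0 0 x5) = x1.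
Proof.
move=> H0 H1; rewrite /nrm /co inord5_4 /mk5 /=.
rewrite (_ : 1 - x5 * x5 = x1 * x1); last lra.
exact: sqrt_square.
Qed.

Section MeridianFibre.
Variables x1 x5 : R.
Hypothesis x1_ge0 : 0 <= x1.
Hypothesis x1_neq0 : x1 <> 0.
Hypothesis on_sphere : x1*x1+x5*x5 = 1.
Let x := mk5 x1 0 0 0 x5.

Ltac frame_entries := apply: vec_ext; apply: ord5_cases; rewrite /sc /co /x !inordE /mk5 /=;
  first [field; exact x1_neq0
        | rewrite (_ : 1 - x5 * x5 = x1 * x1); [field; exact x1_neq0 | lra]].

Lemma fe1_meridian : fe1 x = mk5 0 1 0 0 0.
Proof. rewrite /fe1 nrm_meridian //; frame_entries. Qed.
Lemma fe2_meridian : fe2 x = mk5 0 0 1 0 0.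
Proof. rewrite /fe2 nrm_meridian //; frame_entries. Qed.
Lemma fe3_meridian : fe3 x = mk5 0 0 0 1 0.
Proof. rewrite /fe3 nrm_meridian //; frame_entries. Qed.
Lemma fe4_meridian : fe4 x = mk5 (-x5) 0 0 0 x1.
Proof. rewrite /fe4 nrm_meridian //; frame_entries. Qed.

Lemma act_fiber a b e f m n a1 a2 a3 :
  act (liftU2 (um a b e f m n)) (x, fiber_form x a1 a2 a3) =
  (mk5 (a*x1) (b*x1) (e*x1) (f*x1) x5,
   let N := mk5 (-x5*a) (-x5*b) (-x5*e) (-x5*f) x1 in
   let C1 := ucol1 a b e f in let C2 := ucol2 a b e f m n in
   let C3 := ucol3 a b e f m n 1 in
   lin3 a1 a2 a3 (msub (wedge C1 C2) (wedge C3 N)) (msub (wedge C1 C3) (wedge N C2))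
     (msub (wedge C1 N) (wedge C2 C3))).
Proof.
rewrite act_eq /=; congr pair; first exact: mv_meridian.
change (fiber_form x a1 a2 a3) with (lin3 a1 a2 a3 (omega1 x) (omega2 x) (omega3 x)).
rewrite act2_lin3 /omega1 /omega2 /omega3 !act2_msw.
by rewrite fe1_meridian fe2_meridian fe3_meridian fe4_meridian mv_E2 mv_E3 mv_E4 mv_normal.
Qed.
End MeridianFibre.

Lemma act_pole a b e f m n s A1 A2 A3 :
  act (liftU2 (um a b e f m n)) (pole s, pole_form s A1 A2 A3) =
  (pole s,
   let C0 := ucol0 a b e f in let C1 := ucol1 a b e f in let C2 := ucol2 a b e f m n in
   let C3 := ucol3 a b e f m n s in
   lin3 A1 A2 A3 (msub (wedge C0 C1) (wedge C2 C3)) (msub (wedge C0 C2) (wedge C3 C1))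
     (msub (wedge C0 C3) (wedge C1 C2))).
Proof.
rewrite act_eq /=; congr pair; first exact: mv_pole.
change (pole_form s A1 A2 A3) with (lin3 A1 A2 A3 (Omega1 s) (Omega2 s) (Omega3 s)).
rewrite act2_lin3 /Omega1 /Omega2 /Omega3 !act2_msw /pf1 /pf2 /pf3 /pf4.
by rewrite mv_E1 mv_E2 mv_E3 mv_E4.
Qed.

Notation Coord := ('I_5 + 'I_5 * 'I_5)%type.

Lemma orbit_param p0 v : orbit p0 v -> exists a b e f m n,
  a*a+b*b+e*e+f*f = 1 /\ m*m+n*n = 1 /\ v = emb (act (liftU2 (um a b e f m n)) p0).
Proof.
move=> [u [Hu ->]]; have [a [b [e [f [m [n [H1 [H2 ->]]]]]]]] := U2_um Hu.
by exists a, b, e, f, m, n.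
Qed.

Lemma orbit_diffeomorphic (J : finType) (p0 : bpoint) (B : (J -> R) -> Prop)
    (F : (Coord -> R) -> J -> R) (G : (J -> R) -> Coord -> R) :
  (forall j, is_poly (fun v => F v j)) -> (forall i, is_poly (fun y => G y i)) ->
  (forall a b e f m n, a*a+b*b+e*e+f*f = 1 -> m*m+n*n = 1 ->
     let v := emb (act (liftU2 (um a b e f m n)) p0) in B (F v) /\ G (F v) = v) ->
  (forall y, B y -> orbit p0 (G y) /\ F (G y) = y) ->
  diffeomorphic (orbit p0) B.
Proof.
move=> PF PG HF HG; apply: poly_diffeomorphic PF PG _ HG.
by move=> v /orbit_param [a [b [e [f [m [n [S1 [S2 ->]]]]]]]]; apply: HF.
Qed.

Lemma orbit_fixed_point (p0 : bpoint) :
  (forall a b e f m n, a*a+b*b+e*e+f*f = 1 -> m*m+n*n = 1 ->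
     act (liftU2 (um a b e f m n)) p0 = p0) ->
  diffeomorphic (orbit p0) point_set.
Proof.
move=> Hfix.
apply: (@orbit_diffeomorphic _ _ _ (fun _ _ => 0) (fun _ => emb p0)).
- by move=> j; exact: poly_c.
- by move=> i; exact: poly_c.
- by move=> a b e f m n S1 S2 /=; rewrite Hfix.
- move=> y _; split; last by apply: functional_extensionality => -[].
  exists (um 1 0 0 0 1 0); split; first by apply: um_U2; lra.
  by rewrite Hfix //; lra.
Qed.

Lemma poly_lift (k l : 'I_5) :
  is_poly (fun w : 'I_4 * 'I_4 -> R => liftU2 (fun i j => w (i, j)) k l).
Proof. rewrite /liftU2; case: (_ && _); [exact: poly_v | case: (_ && _); exact: poly_c]. Qed.

Lemma poly_lift_um (k l : 'I_5) :
  is_poly (fun w : 'I_4 -> R => liftU2 (um (w q0) (w q1) (w q2) (w q3) 1 0) k l).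
Proof.
rewrite /liftU2; case: (_ && _); last by case: (_ && _); exact: poly_c.
rewrite /um /jmat /vec4; case: (nat_of_ord (@inord 3 l)) => [|[|[|?]]];
  case: (nat_of_ord (@inord 3 k)) => [|[|[|?]]]; solve_poly.
Qed.

(* Reading u back from u . p0 over a meridian point with x1 <> 0: the
   base point gives the first column of u divided by x1; the last column
   of the transformed form gives x1 (a2 col2 + a1 col3 + a3 col1) of u,
   from which col2 is solved when a1^2 + a2^2 <> 0.  Columns 1 and 3 are
   J times columns 0 and 2. *)
Definition Jrot (w : nat -> R) (i : nat) : R :=
  match i with 0 => - w 1%N | 1 => w 0%N | 2 => - w 3%N | _ => w 2%N end.
Definition base_col (x1 : R) (v : Coord -> R) (k : nat) : R := / x1 * v (inl (inord k)).
Definition form_col (x1 a3 : R) (v : Coord -> R) (k : nat) : R :=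
  / x1 * v (inr (inord k, inord 4)) - a3 * Jrot (base_col x1 v) k.
Definition third_col (x1 a1 a2 a3 : R) (v : Coord -> R) (k : nat) : R :=
  / (a1*a1+a2*a2) * (a2 * form_col x1 a3 v k + a1 * Jrot (form_col x1 a3 v) k).
Definition fiber_chart (x1 a1 a2 a3 : R) (v : Coord -> R) (ij : 'I_4 * 'I_4) : R :=
  match nat_of_ord ij.2 with
  | 0 => base_col x1 v ij.1 | 1 => Jrot (base_col x1 v) ij.1
  | 2 => third_col x1 a1 a2 a3 v ij.1 | _ => Jrot (third_col x1 a1 a2 a3 v) ij.1 end.

Definition meridian_chart (x1 : R) (v : Coord -> R) (i : 'I_4) : R := / x1 * v (inl (inord i)).

Lemma meridian_x1_neq0 x1 x5 :
  0 <= x1 -> x1*x1+x5*x5 = 1 -> x5 <> 1 -> x5 <> -1 -> x1 <> 0.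
Proof.
move=> H0 H1 Hn1 Hn2 Hx; subst x1.
have : (x5 - 1) * (x5 + 1) = 0 by lra.
by case/Rmult_integral => ?; [apply: Hn1 | apply: Hn2]; lra.
Qed.

Section OffPoles.
Variables x1 x5 a1 a2 a3 : R.
Hypothesis x1_ge0 : 0 <= x1.
Hypothesis x1_neq0 : x1 <> 0.
Hypothesis on_sphere : x1*x1+x5*x5 = 1.
Let x := mk5 x1 0 0 0 x5.
Let p0 : bpoint := (x, fiber_form x a1 a2 a3).

Lemma fiber_chart_act a b e f m n : a1*a1+a2*a2 <> 0 ->
  fiber_chart x1 a1 a2 a3 (emb (act (liftU2 (um a b e f m n)) p0)) =
  fun ij => um a b e f m n ij.1 ij.2.
Proof.
move=> Ha; rewrite /p0 act_fiber //.
apply: functional_extensionality => -[i j]; move: i j; apply: ord4_cases; apply: ord4_cases;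
rewrite /fiber_chart /third_col /form_col /base_col /Jrot /= !inordE /emb /lin3 /msub /wedge
  /ucol1 /ucol2 /ucol3 /mk5 /um /jmat /vec4 /=;
by field; try split.
Qed.

(* Generic fibre: the orbit map u |-> u . p0 is injective. *)
Lemma generic_orbit_U2 : (a1 <> 0 \/ a2 <> 0) -> diffeomorphic (orbit p0) U2_set.
Proof.
move=> Ha; have Ha' : a1*a1+a2*a2 <> 0 by case: Ha => H; nra.
apply: (@orbit_diffeomorphic _ _ _ (fiber_chart x1 a1 a2 a3)
          (fun w => emb (act (liftU2 (fun i j => w (i, j))) p0))).
- move=> -[i j]; move: i j; apply: ord4_cases; apply: ord4_cases;
    rewrite /fiber_chart /third_col /form_col /base_col /Jrot /=; solve_poly.
- move=> -[i|[i j]]; rewrite /act /=; solve_poly; exact: poly_lift.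
- by move=> a b e f m n S1 S2 /=; rewrite fiber_chart_act //; split; [exact: um_U2|].
- move=> w Hw; split; first by exists (fun i j => w (i, j)).
  have [a [b [e [f [m [n [S1 [S2 Hu]]]]]]]] := U2_um Hw.
  rewrite Hu fiber_chart_act //.
  by apply: functional_extensionality => -[i j] /=; rewrite -Hu.
Qed.

Lemma meridian_chart_act a b e f m n :
  meridian_chart x1 (emb (act (liftU2 (um a b e f m n)) p0)) = vec4 a b e f.
Proof.
rewrite /p0 act_fiber //.
apply: functional_extensionality; apply: ord4_cases;
by rewrite /meridian_chart /= !inordE /emb /mk5 /vec4 /=; field.
Qed.

Lemma phase_fixes_degenerate m n : a1 = 0 -> a2 = 0 -> m*m+n*n = 1 ->
  act (liftU2 (um 1 0 0 0 m n)) p0 = p0.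
Proof.
move=> Ha1 Ha2 S2; rewrite /p0 act_fiber // Ha1 Ha2; congr pair; first by rewrite /x; congr mk5; ring.
have HA : (m*m+n*n)*a3 = a3 by rewrite S2; ring.
rewrite /fiber_form /omega1 /omega2 /omega3.
rewrite fe1_meridian // fe2_meridian // fe3_meridian // fe4_meridian //.
apply: mat_ext; apply: ord5_cases; apply: ord5_cases;
  rewrite /lin3 /msub /wedge /ucol1 /ucol2 /ucol3 /mk5 /=; first [ring | lra].
Qed.

(* Degenerate fibre: the stabiliser is the phase circle, the orbit is the
   orbit of SU(2) = S^3, which acts freely. *)
Lemma degenerate_orbit_S3 : a1 = 0 -> a2 = 0 -> diffeomorphic (orbit p0) (sphere 3).
Proof.
move=> Ha1 Ha2.
apply: (@orbit_diffeomorphic _ _ _ (meridian_chart x1)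
          (fun w => emb (act (liftU2 (um (w q0) (w q1) (w q2) (w q3) 1 0)) p0))).
- by move=> i; rewrite /meridian_chart; solve_poly.
- by move=> -[i|[i j]]; rewrite /act /=; solve_poly; apply: poly_lift_um.
- move=> a b e f m n S1 S2 /=; rewrite meridian_chart_act /vec4 /=; split.
    by rewrite /sphere rsum4 /vec4 /=; lra.
  by rewrite [in RHS]act_factor phase_fixes_degenerate.
- move=> w Hw; split; last first.
    by rewrite meridian_chart_act; apply: functional_extensionality; apply: ord4_cases.
  exists (um (w q0) (w q1) (w q2) (w q3) 1 0); split=> //.
  by apply: um_U2; [rewrite /sphere rsum4 in Hw | lra].
Qed.
End OffPoles.

(* Over the poles.  The rotation of R^3 (scaled by |q|^2) induced by the
   quaternion q = (a,b,e,f), i.e. the double cover SU(2) -> SO(3). *)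
Definition rotq1 (a b e f A1 A2 A3 : R) : R :=
  (a*a+b*b-e*e-f*f)*A1 + 2*(b*e+a*f)*A2 + 2*(b*f-a*e)*A3.
Definition rotq2 (a b e f A1 A2 A3 : R) : R :=
  2*(b*e-a*f)*A1 + (a*a-b*b+e*e-f*f)*A2 + 2*(a*b+e*f)*A3.
Definition rotq3 (a b e f A1 A2 A3 : R) : R :=
  2*(b*f+a*e)*A1 + 2*(e*f-a*b)*A2 + (a*a-b*b-e*e+f*f)*A3.

Lemma rotq_norm a b e f A1 A2 A3 :
  rotq1 a b e f A1 A2 A3 * rotq1 a b e f A1 A2 A3 + rotq2 a b e f A1 A2 A3 * rotq2 a b e f A1 A2 A3
  + rotq3 a b e f A1 A2 A3 * rotq3 a b e f A1 A2 A3 =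
  (a*a+b*b+e*e+f*f) * (a*a+b*b+e*e+f*f) * (A1*A1+A2*A2+A3*A3).
Proof. rewrite /rotq1 /rotq2 /rotq3; ring. Qed.

Ltac pole_entries :=
  apply: mat_ext; apply: ord5_cases; apply: ord5_cases;
  rewrite /pole_form /Omega1 /Omega2 /Omega3 /pf1 /pf2 /pf3 /pf4 /lin3 /msub /wedge
    /ucol0 /ucol1 /ucol2 /ucol3 /mk5 /=.

Lemma act_north_quaternion a b e f A1 A2 A3 :
  act (liftU2 (um a b e f 1 0)) (pole 1, pole_form 1 A1 A2 A3) =
  (pole 1, pole_form 1 (rotq1 a b e f A1 A2 A3) (rotq2 a b e f A1 A2 A3)
                       (rotq3 a b e f A1 A2 A3)).
Proof. rewrite act_pole /=; congr pair; pole_entries; rewrite /rotq1 /rotq2 /rotq3; ring. Qed.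

Lemma act_south_quaternion a b e f A1 A2 A3 :
  act (liftU2 (um a b e f 1 0)) (pole (-1), pole_form (-1) A1 A2 A3) =
  (pole (-1), pole_form (-1) ((a*a+b*b+e*e+f*f)*A1) ((a*a+b*b+e*e+f*f)*A2)
                             ((a*a+b*b+e*e+f*f)*A3)).
Proof. rewrite act_pole /=; congr pair; pole_entries; ring. Qed.

Lemma act_pole_phase m n s A1 A2 A3 : m*m+n*n = 1 -> s = 1 \/ s = -1 ->
  act (liftU2 (um 1 0 0 0 m n)) (pole s, pole_form s A1 A2 A3) =
  (pole s, pole_form s A1 (m*A2 - s*n*A3) (s*n*A2 + m*A3)).
Proof.
move=> S2 Hs; rewrite act_pole /=; congr pair.
have HA : (m*m+n*n)*A1 = A1 by rewrite S2; ring.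
by case: Hs => ->; pole_entries; first [ring | lra].
Qed.

Lemma act_north a b e f m n A1 A2 A3 : m*m+n*n = 1 ->
  act (liftU2 (um a b e f m n)) (pole 1, pole_form 1 A1 A2 A3) =
  (pole 1, pole_form 1 (rotq1 a b e f A1 (m*A2 - n*A3) (n*A2 + m*A3))
                       (rotq2 a b e f A1 (m*A2 - n*A3) (n*A2 + m*A3))
                       (rotq3 a b e f A1 (m*A2 - n*A3) (n*A2 + m*A3))).
Proof.
move=> S2; rewrite act_factor act_pole_phase //; last by left.
by rewrite act_north_quaternion !Rmult_1_l.
Qed.

Lemma act_south a b e f m n A1 A2 A3 : a*a+b*b+e*e+f*f = 1 -> m*m+n*n = 1 ->
  act (liftU2 (um a b e f m n)) (pole (-1), pole_form (-1) A1 A2 A3) =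
  (pole (-1), pole_form (-1) A1 (m*A2 + n*A3) (m*A3 - n*A2)).
Proof.
move=> S1 S2; rewrite act_factor act_pole_phase //; last by right.
by rewrite act_south_quaternion S1; congr (_, pole_form _ _ _ _); ring.
Qed.

(* For a pure unit quaternion n, rotq is the half-turn about the axis n. *)
Lemma rotq_half_turn n1 n2 n3 A1 A2 A3 : n1*n1+n2*n2+n3*n3 = 1 ->
  let d := n1*A1+n2*A2+n3*A3 in
  rotq1 0 n1 n2 n3 A1 A2 A3 = 2*n1*d - A1 /\
  rotq2 0 n1 n2 n3 A1 A2 A3 = 2*n2*d - A2 /\
  rotq3 0 n1 n2 n3 A1 A2 A3 = 2*n3*d - A3.
Proof.
move=> Hn d; rewrite /d /rotq1 /rotq2 /rotq3.
have H1 : (n1*n1+n2*n2+n3*n3)*A1 = A1 by rewrite Hn; ring.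
have H2 : (n1*n1+n2*n2+n3*n3)*A2 = A2 by rewrite Hn; ring.
have H3 : (n1*n1+n2*n2+n3*n3)*A3 = A3 by rewrite Hn; ring.
by split; [|split]; lra.
Qed.

(* Half-turns act transitively on each sphere |A| = r > 0: the axis is
   A/r + b (normalised), or any axis orthogonal to A if b = -A/r. *)
Lemma half_turn_exists A1 A2 A3 r b1 b2 b3 :
  0 < r -> r*r = A1*A1+A2*A2+A3*A3 -> b1*b1+b2*b2+b3*b3 = 1 ->
  exists n1 n2 n3, n1*n1+n2*n2+n3*n3 = 1 /\
    2*n1*(n1*A1+n2*A2+n3*A3) - A1 = r*b1 /\
    2*n2*(n1*A1+n2*A2+n3*A3) - A2 = r*b2 /\
    2*n3*(n1*A1+n2*A2+n3*A3) - A3 = r*b3.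
Proof.
move=> Hr0 Hr Hb.
pose w1 := A1 + r*b1; pose w2 := A2 + r*b2; pose w3 := A3 + r*b3.
pose W := w1*w1+w2*w2+w3*w3.
case: (Req_dec W 0) => HW.
  have [Z1 [Z2 Z3]] : w1 = 0 /\ w2 = 0 /\ w3 = 0
    by rewrite /W in HW; split; [nra|split; nra].
  rewrite /w1 in Z1; rewrite /w2 in Z2; rewrite /w3 in Z3.
  case: (Req_dec (A1*A1+A2*A2) 0) => HA.
    have [Y1 Y2] : A1 = 0 /\ A2 = 0 by split; nra.
    by exists 1, 0, 0; rewrite Y1 Y2; split; [ring|split; [|split]]; nra.
  pose d := sqrt (A1*A1+A2*A2).
  have Hd : d * d = A1*A1+A2*A2 by apply: sqrt_sqrt; nra.
  have Hd0 : 0 < d by apply: sqrt_lt_R0; nra.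
  exists (-A2/d), (A1/d), 0; split; first by field_simplify_eq; lra.
  have -> : -A2/d*A1 + A1/d*A2 + 0*A3 = 0 by field; lra.
  by split; [|split]; lra.
have HW0 : 0 <= W by rewrite /W; nra.
pose D := sqrt W.
have HD : D * D = W by apply: sqrt_sqrt.
have HD0 : 0 < D by apply: sqrt_lt_R0; lra.
have E2 : 2*(w1*A1+w2*A2+w3*A3) = W.
  have E : W - 2*(w1*A1+w2*A2+w3*A3) = r*r*(b1*b1+b2*b2+b3*b3) - (A1*A1+A2*A2+A3*A3)
    by rewrite /W /w1 /w2 /w3; ring.
  by rewrite Hb -Hr in E; lra.
exists (w1/D), (w2/D), (w3/D); split.
  rewrite (_ : w1/D*(w1/D)+w2/D*(w2/D)+w3/D*(w3/D) = W / (D*D)); last by rewrite /W; field; lra.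
  by rewrite HD; field.
have key : forall wk, 2*(wk/D)*(w1/D*A1+w2/D*A2+w3/D*A3) = wk.
  move=> wk; rewrite (_ : 2*(wk/D)*(w1/D*A1+w2/D*A2+w3/D*A3) =
                          wk * (2*(w1*A1+w2*A2+w3*A3)) / (D*D)); last by field; lra.
  by rewrite E2 HD; field.
by rewrite !key /w1 /w2 /w3; split; [|split]; ring.
Qed.

(* The pole coordinates can be read off the first row of the form. *)
Definition vec3 (x y z : R) (i : 'I_3) : R :=
  match nat_of_ord i with 0 => x | 1 => y | _ => z end.
Definition vec2 (x y : R) (i : 'I_2) : R := match nat_of_ord i with 0 => x | _ => y end.

Definition north_chart (r : R) (v : Coord -> R) (k : 'I_3) : R :=
  / r * v (inr (o5_0, inord k.+1)).
Definition south_chart (r : R) (v : Coord -> R) (k : 'I_2) : R :=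
  if nat_of_ord k == 0%N then / r * v (inr (o5_0, o5_2)) else - / r * v (inr (o5_0, o5_3)).

Lemma north_chart_form r B1 B2 B3 :
  north_chart r (emb (pole 1, pole_form 1 B1 B2 B3)) = vec3 (/r*B1) (/r*B2) (/r*B3).
Proof.
apply: functional_extensionality; apply: ord3_cases; rewrite /north_chart /= !inordE /vec3 /=;
rewrite /pole_form /Omega1 /Omega2 /Omega3 /pf1 /pf2 /pf3 /pf4 /msub /wedge /mk5 /=; ring.
Qed.

Lemma south_chart_form r B1 B2 B3 :
  south_chart r (emb (pole (-1), pole_form (-1) B1 B2 B3)) = vec2 (/r*B2) (/r*B3).
Proof.
apply: functional_extensionality; apply: ord2_cases; rewrite /south_chart /vec2 /=;
rewrite /pole_form /Omega1 /Omega2 /Omega3 /pf1 /pf2 /pf3 /pf4 /msub /wedge /mk5 /=; ring.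
Qed.

Lemma pole_form_zero s A1 A2 A3 : (forall i j, pole_form s A1 A2 A3 i j = 0) ->
  A1 = 0 /\ A2 = 0 /\ s * A3 = 0.
Proof.
move=> H.
have H1 := H o5_0 o5_1; have H2 := H o5_0 o5_2; have H3 := H o5_0 o5_3.
rewrite /pole_form /Omega1 /Omega2 /Omega3 /pf1 /pf2 /pf3 /pf4 /msub /wedge /mk5 /= in H1 H2 H3.
by ring_simplify in H1; ring_simplify in H2; ring_simplify in H3; split; [lra|split; lra].
Qed.

(* North pole, nonzero form: U(2) acts through SO(3) on the 2-sphere of
   radius |A|; the stabiliser of A is a circle and the orbit is S^2. *)
Lemma north_orbit_S2 A1 A2 A3 : A1*A1+A2*A2+A3*A3 <> 0 ->
  diffeomorphic (orbit (pole 1, pole_form 1 A1 A2 A3)) (sphere 2).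
Proof.
move=> HA.
pose r := sqrt (A1*A1+A2*A2+A3*A3).
have Hr : r * r = A1*A1+A2*A2+A3*A3 by apply: sqrt_sqrt; nra.
have Hr0 : 0 < r by apply: sqrt_lt_R0; nra.
apply: (@orbit_diffeomorphic _ _ _ (north_chart r)
          (fun y => emb (pole 1, pole_form 1 (r * y t0) (r * y t1) (r * y t2)))).
- by move=> k; rewrite /north_chart; solve_poly.
- by move=> -[i|[i j]] /=; [solve_poly | rewrite /pole_form; solve_poly].
- move=> a b e f m n S1 S2 /=; rewrite act_north // north_chart_form.
  set P1 := rotq1 _ _ _ _ _ _ _; set P2 := rotq2 _ _ _ _ _ _ _; set P3 := rotq3 _ _ _ _ _ _ _.
  have N : P1*P1+P2*P2+P3*P3 = r*r.
    have E : (m*A2 - n*A3)*(m*A2 - n*A3) + (n*A2 + m*A3)*(n*A2 + m*A3) =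
             (m*m+n*n)*(A2*A2+A3*A3) by ring.
    by rewrite /P1 /P2 /P3 rotq_norm S1 Hr; rewrite S2 in E; lra.
  split; last by congr (emb (_, pole_form _ _ _ _)); rewrite /vec3 /=; field; lra.
  rewrite /sphere rsum3 /vec3 /=.
  rewrite (_ : /r*P1*(/r*P1) + /r*P2*(/r*P2) + /r*P3*(/r*P3) = (P1*P1+P2*P2+P3*P3) / (r*r));
    last by field; lra.
  by rewrite N; field; lra.
- move=> y Hy; split; last first.
    rewrite north_chart_form; apply: functional_extensionality; apply: ord3_cases;
    by rewrite /vec3 /=; field; lra.
  rewrite /sphere rsum3 in Hy.
  have [n1 [n2 [n3 [Hn [E1 [E2 E3]]]]]] := half_turn_exists Hr0 Hr Hy.
  exists (um 0 n1 n2 n3 1 0); split; first by apply: um_U2; lra.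
  rewrite act_north; last lra.
  have [R1 [R2 R3]] := rotq_half_turn A1 (1*A2 - 0*A3) (0*A2 + 1*A3) Hn.
  rewrite R1 R2 R3 -E1 -E2 -E3; congr (emb (_, pole_form _ _ _ _)); ring.
Qed.

(* South pole, (A2,A3) <> 0: only the phase acts, rotating (A2,A3) on a
   circle. *)
Lemma south_orbit_S1 A1 A2 A3 : A2*A2+A3*A3 <> 0 ->
  diffeomorphic (orbit (pole (-1), pole_form (-1) A1 A2 A3)) (sphere 1).
Proof.
move=> HA.
pose r := sqrt (A2*A2+A3*A3).
have Hr : r * r = A2*A2+A3*A3 by apply: sqrt_sqrt; nra.
have Hr0 : 0 < r by apply: sqrt_lt_R0; nra.
apply: (@orbit_diffeomorphic _ _ _ (south_chart r)
          (fun t => emb (pole (-1), pole_form (-1) A1 (r * t d0) (r * t d1)))).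
- by move=> k; rewrite /south_chart; case: (_ == _); solve_poly.
- by move=> -[i|[i j]] /=; [solve_poly | rewrite /pole_form; solve_poly].
- move=> a b e f m n S1 S2 /=; rewrite act_south // south_chart_form.
  split; last by congr (emb (_, pole_form _ _ _ _)); rewrite /vec2 /=; field; lra.
  rewrite /sphere rsum2 /vec2 /=.
  rewrite (_ : /r*(m*A2+n*A3)*(/r*(m*A2+n*A3)) + /r*(m*A3-n*A2)*(/r*(m*A3-n*A2))
     = (m*m+n*n)*(A2*A2+A3*A3) / (r*r)); last by field; lra.
  by rewrite S2 Hr; field.
- move=> t Ht; split; last first.
    rewrite south_chart_form; apply: functional_extensionality; apply: ord2_cases;
    by rewrite /vec2 /=; field; lra.
  rewrite /sphere rsum2 in Ht.
  pose m := (A2 * t d0 + A3 * t d1) / r; pose n := (A3 * t d0 - A2 * t d1) / r.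
  have S2 : m*m+n*n = 1.
    rewrite /m /n (_ : ((A2 * t d0 + A3 * t d1) / r) * ((A2 * t d0 + A3 * t d1) / r) +
       ((A3 * t d0 - A2 * t d1) / r) * ((A3 * t d0 - A2 * t d1) / r) =
       (t d0 * t d0 + t d1 * t d1) * (A2*A2+A3*A3) / (r*r)); last by field; lra.
    by rewrite Ht Hr; field.
  exists (um 1 0 0 0 m n); split; first by apply: um_U2; lra.
  rewrite act_south //; last lra.
  congr (emb (_, pole_form _ _ _ _)); rewrite /m /n.
  + rewrite (_ : (A2 * t d0 + A3 * t d1) / r * A2 + (A3 * t d0 - A2 * t d1) / r * A3
        = (A2*A2+A3*A3) * t d0 / r); last by field; lra.
    by rewrite -Hr; field; lra.
  + rewrite (_ : (A2 * t d0 + A3 * t d1) / r * A3 - (A3 * t d0 - A2 * t d1) / r * A2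
        = (A2*A2+A3*A3) * t d1 / r); last by field; lra.
    by rewrite -Hr; field; lra.
Qed.

Theorem lemma4p5 :
  (* every point is mapped into the fiber over some t(x1,0,0,0,x5), x1 >= 0 *)
  (forall p : bpoint, in_Lambda2m p ->
     exists u, U2 u /\ exists x1 x5, 0 <= x1 /\ (act (liftU2 u) p).1 = mk5 x1 0 0 0 x5)
  /\
  (* x5 <> +-1 *)
  (forall x1 x5 a1 a2 a3 : R, 0 <= x1 -> x1 * x1 + x5 * x5 = 1 -> x5 <> 1 -> x5 <> -1 ->
     let x := mk5 x1 0 0 0 x5 in
     let p0 : bpoint := (x, fiber_form x a1 a2 a3) in
     ((a1 <> 0 \/ a2 <> 0) -> diffeomorphic (orbit p0) U2_set) /\
     ((a1 = 0 /\ a2 = 0) -> diffeomorphic (orbit p0) (sphere 3%nat)))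
  /\
  (* x5 = 1 *)
  (forall A1 A2 A3 : R,
     let p0 : bpoint := (pole 1, pole_form 1 A1 A2 A3) in
     (~ (forall i j, p0.2 i j = 0) -> diffeomorphic (orbit p0) (sphere 2%nat)) /\
     ((forall i j, p0.2 i j = 0) -> diffeomorphic (orbit p0) point_set))
  /\
  (* x5 = -1 *)
  (forall A1 A2 A3 : R,
     let p0 : bpoint := (pole (-1), pole_form (-1) A1 A2 A3) in
     ((A2 <> 0 \/ A3 <> 0) -> diffeomorphic (orbit p0) (sphere 1%nat)) /\
     ((A2 = 0 /\ A3 = 0) -> diffeomorphic (orbit p0) point_set)).
Proof.
split; first by move=> p _; exact: reduce_to_meridian.
split.
  move=> x1 x5 a1 a2 a3 H0 H1 Hn1 Hn2 x p0.
  have Hx := meridian_x1_neq0 H0 H1 Hn1 Hn2.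
  by split; [apply: generic_orbit_U2 | case; apply: degenerate_orbit_S3].
split.
  move=> A1 A2 A3 p0; split=> [Hnz | /pole_form_zero [Z1 [Z2 Z3]]].
    apply: north_orbit_S2 => HA; apply: Hnz => i j; rewrite /p0 /=.
    have [-> [-> ->]] : A1 = 0 /\ A2 = 0 /\ A3 = 0 by split; [nra|split; nra].
    by rewrite /pole_form; ring.
  have Z3' : A3 = 0 by lra.
  apply: orbit_fixed_point => a b e f m n _ S2.
  rewrite /p0 act_north // Z1 Z2 Z3'.
  by congr (_, pole_form _ _ _ _); rewrite /rotq1 /rotq2 /rotq3; ring.
move=> A1 A2 A3 p0; split=> [Hnz | [Z2 Z3]].
  by apply: south_orbit_S1; case: Hnz => H; nra.
apply: orbit_fixed_point => a b e f m n S1 S2.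
by rewrite /p0 act_south // Z2 Z3; congr (_, pole_form _ _ _ _); ring.
Qed.
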